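(* Let $b,c\in Z^{10}$ with $\sum_i b_i=\sum_i c_i=0$. Let $j\in\{1,3,5,7,9\}$ and let $i_1,i_2,i_3,i_4$ be the remaining four odd indices listed in cyclic order. Assume $t\mid B_j$, $t\mid C_j$, and $t\nmid B_{i_l}$, $t\nmid C_{i_l}$ for $l=1,2,3,4$. Assume moreover $t\nmid B_{i_1}+B_{i_2}$, $t\mid B_{i_2}+B_{i_3}$, $t\nmid C_{i_1}+C_{i_2}$ and $t\mid C_{i_2}+C_{i_3}$. Then $\mathbb{M}(b)$ and $\mathbb{M}(c)$ are isomorphic $B_{5,10}$-modules.
   Context: Let $Z=\mathbb{C}[[t]]$. Let $\Gamma_{10}$ be the quiver with vertices $0,1,\dots,9$ (indices taken mod $10$) on a cycle and arrows $x_i\colon i-1\to i$, $y_i\colon i\to i-1$ for $i=1,\dots,10$. Let $B_{5,10}$ be the completed path algebra of $\Gamma_{10}$ modulo the closed ideal generated by $xy=yx$ and $x^5=y^5$ at every vertex. For $b=(b_1,\dots,b_{10})\in Z^{10}$ with $\sum_i b_i=0$, the $B_{5,10}$-module $\mathbb{M}(b)$ has $V_i=Z\oplus Z$ at every vertex, and for odd $j$: $x_j=\begin{pmatrix} t& b_j\\ 0&1\end{pmatrix}$, $y_j=\begin{pmatrix} 1&-b_j\\0&t\end{pmatrix}$; for even $j$: $x_j=\begin{pmatrix}1&b_j\\0&t\end{pmatrix}$, $y_j=\begin{pmatrix}t&-b_j\\0&1\end{pmatrix}$. An isomorphism $\mathbb{M}(b)\to\mathbb{M}(c)$ is a family of invertible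 $Z$-linear maps $\varphi_i\colon Z^2\to Z^2$ commuting with all $x_i$ and $y_i$. For odd $i$ write $B_i=b_i+b_{i+1}$ and $C_i=c_i+c_{i+1}$ (indices mod $10$). *)

From HB Require Import structures.
From mathcomp Require Import all_boot all_order all_algebra.
From mathcomp Require Import boolp.
From mathcomp Require Import complex.
From mathcomp Require Import Rstruct.
Set Implicit Arguments. Unset Strict Implicit. Unset Printing Implicit Defensive.
Import Order.TTheory GRing.Theory Num.Theory.
Local Open Scope ring_scope.

Record fps (K : Type) := FPS { coef : nat -> K }.

HB.instance Definition _ (K : Type) := gen_eqMixin (fps K).
HB.instance Definition _ (K : Type) := gen_choiceMixin (fps K).

Lemma fpsP (K : Type) (f g : fps K) : (forall n, coef f n = coef g n) -> f = g.
Proof. by case: f; case: g => a b /= H; congr FPS; apply: funext. Qed.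

Definition fps0 (K : nmodType) : fps K := FPS (fun _ => 0).
Definition fpsD (K : nmodType) (f g : fps K) := FPS (fun n => coef f n + coef g n).
Definition fpsN (K : zmodType) (f : fps K) := FPS (fun n => - coef f n).

Fact fpsA (K : zmodType) : associative (@fpsD K).
Proof. by move=> f g h; apply: fpsP => n /=; rewrite addrA. Qed.
Fact fpsC (K : zmodType) : commutative (@fpsD K).
Proof. by move=> f g; apply: fpsP => n /=; rewrite addrC. Qed.
Fact fps0D (K : zmodType) : left_id (@fps0 K) (@fpsD K).
Proof. by move=> f; apply: fpsP => n /=; rewrite add0r. Qed.
Fact fpsND (K : zmodType) : left_inverse (@fps0 K) (@fpsN K) (@fpsD K).
Proof. by move=> f; apply: fpsP => n /=; rewrite addNr. Qed.

HB.instance Definition _ (K : zmodType) :=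
  GRing.isZmodule.Build (fps K) (@fpsA K) (@fpsC K) (@fps0D K) (@fpsND K).

Definition fps1 (K : comNzRingType) : fps K := FPS (fun n => (n == 0)%:R).
Definition fpsM (K : comNzRingType) (f g : fps K) :=
  FPS (fun i => \sum_(j < i.+1) coef f j * coef g (i - j)).

Fact coef_fpsM (K : comNzRingType) (f g : fps K) i :
  coef (fpsM f g) i = \sum_(j < i.+1) coef f j * coef g (i - j).
Proof. by []. Qed.

Fact fpsM_rev (K : comNzRingType) (f g : fps K) i :
  coef (fpsM f g) i = \sum_(j < i.+1) coef f (i - j) * coef g j.
Proof.
rewrite /= (reindex_inj rev_ord_inj) /=.
by apply: eq_bigr => j _; rewrite (sub_ordK j).
Qed.

Fact fpsMA (K : comNzRingType) : associative (@fpsM K).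
Proof.
move=> p q r; apply: fpsP=> i; rewrite coef_fpsM fpsM_rev.
pose coef3 j k := coef p j * (coef q (i - j - k) * coef r k).
transitivity (\sum_(j < i.+1) \sum_(k < i.+1 | (k <= i - j)%N) coef3 j k).
  apply: eq_bigr => j _; rewrite fpsM_rev big_distrr /=.
  by rewrite (big_ord_narrow_leq (leq_subr _ _)).
rewrite (exchange_big_dep predT) //=; apply: eq_bigr => k _.
transitivity (\sum_(j < i.+1 | (j <= i - k)%N) coef3 j k).
  apply: eq_bigl => j; rewrite -ltnS -(ltnS j) -!subSn ?leq_ord //.
  by rewrite -subn_gt0 -(subn_gt0 j) -!subnDA addnC.
rewrite (big_ord_narrow_leq (leq_subr _ _)) big_distrl /=.
by apply: eq_bigr => j _; rewrite /coef3 -!subnDA addnC mulrA.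
Qed.

Fact fpsMC (K : comNzRingType) : commutative (@fpsM K).
Proof.
move=> f g; apply: fpsP => i; rewrite coef_fpsM fpsM_rev.
by apply: eq_bigr => j _; rewrite mulrC.
Qed.

Fact fps1M (K : comNzRingType) : left_id (@fps1 K) (@fpsM K).
Proof.
move=> p; apply: fpsP => i; rewrite /= big_ord_recl subn0 /= mul1r.
by rewrite big1 ?addr0 // => j _; rewrite mul0r.
Qed.

Fact fpsMDl (K : comNzRingType) : left_distributive (@fpsM K) (@fpsD K).
Proof.
move=> p q r; apply: fpsP=> i; rewrite /= -big_split.
by apply: eq_bigr => j _; rewrite mulrDl.
Qed.

Fact fps1_neq0 (K : comNzRingType) : @fps1 K != @fps0 K.
Proof.
apply/eqP => /(congr1 (fun f => coef f 0)) /=; apply/eqP; exact: oner_neq0.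
Qed.

HB.instance Definition _ (K : comNzRingType) :=
  GRing.Zmodule_isComNzRing.Build (fps K) (@fpsMA K) (@fpsMC K) (@fps1M K)
    (@fpsMDl K) (@fps1_neq0 K).


Notation CC := (complex Rdefinitions.R).
Notation Z := (fps CC).

Definition tZ : Z := FPS (fun n => (n == 1)%N%:R).

Definition tdvd (a : Z) : Prop := exists q : Z, a = tZ * q.

Definition mx2 (a b c d : Z) : 'M[Z]_2 :=
  \matrix_(r < 2, s < 2)
    if r == 0 then (if s == 0 then a else b) else (if s == 0 then c else d).

(* Vertices and arrow indices are taken mod 10 and represented in 'I_10;
   the index 10 is represented by 0.  Arrow x_j : j-1 -> j, y_j : j -> j-1. *)
Definition xmat (b : 'I_10 -> Z) (j : 'I_10) : 'M[Z]_2 :=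
  if odd j then mx2 tZ (b j) 0 1 else mx2 1 (b j) 0 tZ.
Definition ymat (b : 'I_10 -> Z) (j : 'I_10) : 'M[Z]_2 :=
  if odd j then mx2 1 (- b j) 0 tZ else mx2 tZ (- b j) 0 1.

(* An isomorphism M(b) -> M(c) of B_{5,10}-modules: a family of invertible
   Z-linear maps phi_i : Z^2 -> Z^2 (matrices acting on column vectors)
   commuting with all x_j and y_j. *)
Definition Miso (b c : 'I_10 -> Z) (phi : 'I_10 -> 'M[Z]_2) : Prop :=
  (forall i : 'I_10, exists psi : 'M[Z]_2,
      phi i *m psi = 1%:M /\ psi *m phi i = 1%:M) /\
  (forall j : 'I_10,
      phi j *m xmat b j = xmat c j *m phi (ord_pred j) /\
      phi (ord_pred j) *m ymat b j = ymat c j *m phi j).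

Definition Misomorphic (b c : 'I_10 -> Z) : Prop := exists phi, Miso b c phi.

Definition Bsum (b : 'I_10 -> Z) (i : 'I_10) : Z := b i + b (ordS i).

Definition shift2 (j : 'I_10) (l : nat) : 'I_10 := inord ((j + 2 * l) %% 10).

(* Let P_n = b_1 + ... + b_n.  The matrices
     [[p0 + sg P^c_n, Q_n], [sg, s0 - sg P^b_n]],
   Q_n = s0 P^c_n - p0 P^b_n - sg P^b_n P^c_n, with the off-diagonal entries
   rescaled by t at even vertices, intertwine all arrows of M(b) and M(c) and
   have determinant p0 s0.  They are defined over Z as soon as t | Q_(2m),
   i.e. when the constant terms (x_m, y_m) of (P^b_(2m), P^c_(2m)) lie on the
   conic s0 y - p0 x - sg x y = 0.  The hypotheses force the constant terms of
   B_j, B_(i1), ..., B_(i4) to be 0, u, v, -v, -u with u, v, u + v nonzero, so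
   x_m = W(l m) - W(l 0) for the three distinct values W = 0, u, u + v and a
   level pattern l depending only on j; likewise for y_m with the same l.  A
   conic through the origin and two further points in general position always
   exists, which yields p0, s0, sg. *)

From HB Require Import structures.
From mathcomp Require Import all_boot all_order all_algebra.
From mathcomp Require Import complex Rstruct.
From mathcomp Require Import ring zify.
Local Open Scope ring_scope.
Import GRing.Theory.

Definition fps_const (z : CC) : Z := FPS (fun n => if n is 0%N then z else 0).
Definition cterm (f : Z) : CC := coef f 0.
Definition fps_divt (f : Z) : Z := FPS (fun n => coef f n.+1).

Lemma ctermD (f g : Z) : cterm (f + g) = cterm f + cterm g. Proof. by []. Qed.
Lemma ctermB (f g : Z) : cterm (f - g) = cterm f - cterm g. Proof. by []. Qed.
Lemma ctermM (f g : Z) : cterm (f * g) = cterm f * cterm g.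
Proof. by rewrite /cterm /= big_ord1 subnn. Qed.
Lemma cterm_const z : cterm (fps_const z) = z. Proof. by []. Qed.
Lemma ctermt : cterm tZ = 0. Proof. by []. Qed.

Lemma coef_fps_constM z (f : Z) n : coef (fps_const z * f) n = z * coef f n.
Proof.
rewrite coef_fpsM big_ord_recl /= subn0 big1 ?addr0 // => i _.
by rewrite mul0r.
Qed.

Lemma fps_constM z w : fps_const z * fps_const w = fps_const (z * w).
Proof. by apply: fpsP => n; rewrite coef_fps_constM; case: n => //= n; rewrite mulr0. Qed.

Lemma fps_const1 : fps_const 1 = 1.
Proof. by apply: fpsP => -[|n]. Qed.

Lemma coef_tM (f : Z) n : coef (tZ * f) n.+1 = coef f n.
Proof.
rewrite coef_fpsM big_ord_recl /= mul0r add0r big_ord_recl /= mul1r subn1 /=.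
by rewrite big1 ?addr0 // => i _; rewrite /= mul0r.
Qed.

Lemma fps_divtK {f : Z} : cterm f = 0 -> tZ * fps_divt f = f.
Proof.
move=> f0; apply: fpsP => -[|n]; last by rewrite coef_tM.
by rewrite -/(cterm (tZ * fps_divt f)) ctermM ctermt mul0r -f0.
Qed.

Lemma tdvdP (f : Z) : tdvd f <-> cterm f = 0.
Proof.
split; first by case=> q ->; rewrite ctermM ctermt mul0r.
by move=> f0; exists (fps_divt f); rewrite fps_divtK.
Qed.

Lemma mx2M (a b c d a' b' c' d' : Z) :
  mx2 a b c d *m mx2 a' b' c' d' =
  mx2 (a * a' + b * c') (a * b' + b * d') (c * a' + d * c') (c * b' + d * d').
Proof.
apply/matrixP => i j; rewrite !mxE !big_ord_recr big_ord0 /= !mxE /= add0r.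
by case: i => -[|[|//]] ?; case: j => -[|[|//]] ?.
Qed.

Lemma mx2_id : (1%:M : 'M[Z]_2) = mx2 1 0 0 1.
Proof.
apply/matrixP => i j; rewrite !mxE.
by case: i => -[|[|//]] ?; case: j => -[|[|//]] ?.
Qed.

Lemma mx2_invertible {P Q R S : Z} {k : CC} : k != 0 -> P * S - Q * R = fps_const k ->
  exists psi, mx2 P Q R S *m psi = 1%:M /\ psi *m mx2 P Q R S = 1%:M.
Proof.
move=> k_neq0 det_k; pose l := fps_const k^-1.
have l_det : l * (P * S - Q * R) = 1 by rewrite det_k fps_constM mulVf ?fps_const1.
exists (mx2 (l * S) (l * - Q) (l * - R) (l * P)).
by rewrite !mx2M mx2_id; split; congr mx2; rewrite -?l_det; ring.
Qed.

Definition conic {R : pzRingType} (p0 s0 sg x y : R) := s0 * y - p0 * x - sg * x * y.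

Lemma conic_through_origin {R : idomainType} {x1 x2 y1 y2 : R} :
  x1 != 0 -> x2 != 0 -> y1 != 0 -> y2 != 0 -> x1 != x2 -> y1 != y2 ->
  exists p0 s0 sg : R, [/\ p0 * s0 != 0, conic p0 s0 sg x1 y1 = 0
                         & conic p0 s0 sg x2 y2 = 0].
Proof.
move=> x1_neq0 x2_neq0 y1_neq0 y2_neq0 x12 y12.
exists (y1 * y2 * (x1 - x2)), (x1 * x2 * (y1 - y2)), (x2 * y1 - x1 * y2).
by split; rewrite /conic ?mulf_neq0 ?subr_eq0 //; ring.
Qed.

Lemma conic_three_levels {R : idomainType} {W W' : 'I_3 -> R} (k0 : 'I_3) :
  injective W -> injective W' ->
  exists p0 s0 sg : R, p0 * s0 != 0 /\
    forall i, conic p0 s0 sg (W i - W k0) (W' i - W' k0) = 0.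
Proof.
move=> W_inj W'_inj.
have [i1 [i2 [i1k0 i2k0 i12 levels]]] : exists i1 i2 : 'I_3,
    [/\ i1 != k0, i2 != k0, i1 != i2 & forall i, [|| i == k0, i == i1 | i == i2]].
  by case: k0 => -[|[|[|//]]] ?; [exists 1, 2 | exists 0, 2 | exists 0, 1];
    split => // -[[|[|[|//]]] ?].
have diff_neq0 (V : 'I_3 -> R) i : injective V -> i != k0 -> V i - V k0 != 0.
  by move=> V_inj; rewrite subr_eq0 (inj_eq V_inj).
have diff_neq (V : 'I_3 -> R) : injective V -> V i1 - V k0 != V i2 - V k0.
  by move=> V_inj; rewrite (inj_eq (addIr _)) (inj_eq V_inj).
have [p0 [s0 [sg [p0s0 conic1 conic2]]]] := conic_through_origin
  (diff_neq0 _ _ W_inj i1k0) (diff_neq0 _ _ W_inj i2k0)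
  (diff_neq0 _ _ W'_inj i1k0) (diff_neq0 _ _ W'_inj i2k0)
  (diff_neq _ W_inj) (diff_neq _ W'_inj).
exists p0, s0, sg; split => // i.
by case/or3P: (levels i) => /eqP -> //; rewrite !subrr /conic; ring.
Qed.

Lemma periodic_modn {T : Type} {f : nat -> T} {n : nat} :
  (forall k, f (k + n)%N = f k) -> forall k, f k = f (k %% n)%N.
Proof.
move=> f_per k; rewrite {1}(divn_eq k n); elim: (k %/ n)%N => [|q IHq].
  by rewrite mul0n add0n.
by rewrite mulSnr addnAC f_per.
Qed.

Definition level_values {V : zmodType} (u v : V) (i : 'I_3) : V := nth 0 [:: 0; u; u + v] i.

(* The cumulative sums a_r + ... + a_(r+k-1), k < 5, of the sequence
   0, u, v, -v, -u take the values 0, 0, u, u + v, u. *)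
Definition cumul_level (k : nat) : 'I_3 := inord (nth 0 [:: 0; 0; 1; 2; 1] k)%N.

Definition vertex_level (r m : nat) : 'I_3 := cumul_level ((m + 5 - r) %% 5).

Lemma level_values_inj {V : zmodType} (u v : V) : u != 0 -> v != 0 -> u + v != 0 ->
  injective (level_values u v).
Proof.
move=> u_neq0 v_neq0 uv_neq0 i i'.
case: i i' => -[|[|[|//]]] ? [[|[|[|//]]] ?]; rewrite /level_values /= => e;
  apply: val_inj => //=; move/eqP: e.
- by rewrite eq_sym (negbTE u_neq0).
- by rewrite eq_sym (negbTE uv_neq0).
- by rewrite (negbTE u_neq0).
- by rewrite -{1}(addr0 u) (inj_eq (addrI u)) eq_sym (negbTE v_neq0).
- by rewrite (negbTE uv_neq0).
- by rewrite -{2}(addr0 u) (inj_eq (addrI u)) (negbTE v_neq0).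
Qed.

Section CyclicPartialSums.

Variables (V : zmodType) (a : nat -> V).
Hypothesis a_per : forall i, a (i + 5)%N = a i.
Hypothesis a_sum : \sum_(i < 5) a i = 0.

Lemma partial_sum_split (r k : nat) :
  \sum_(i < r + k) a i = \sum_(i < r) a i + \sum_(l < k) a (r + l)%N.
Proof. by rewrite big_split_ord. Qed.

Lemma partial_sum_periodic (m : nat) : \sum_(i < m + 5) a i = \sum_(i < m) a i.
Proof.
rewrite addnC partial_sum_split a_sum add0r.
by apply: eq_bigr => i _; rewrite addnC a_per.
Qed.

Lemma partial_sum_levels (r : nat) : (r < 5)%N -> a r = 0 -> a r.+2 + a r.+3 = 0 ->
  forall m, \sum_(i < m) a i =
    level_values (a r.+1) (a r.+2) (vertex_level r m) -
    level_values (a r.+1) (a r.+2) (vertex_level r 0).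
Proof.
move=> r_lt ar0 a23 m.
pose T k := \sum_(l < k) a (r + l)%N.
have T_per k : T (k + 5)%N = T k.
  apply: (@addrI _ (\sum_(i < r) a i)).
  by rewrite -!partial_sum_split addnA partial_sum_periodic.
have T_levels k : (k < 5)%N -> T k = level_values (a r.+1) (a r.+2) (cumul_level k).
  rewrite /T /cumul_level; case: k => [|[|[|[|[|//]]]]] _;
    rewrite ?big_ord_recr big_ord0 /= ?addn0 ?addn1 ?addn2 ?addn3 ?ar0;
    rewrite /level_values inordK //= ?add0r // -addrA a23 addr0 //.
have S_r : \sum_(i < r) a i = - T (5 - r)%N.
  by apply/eqP; rewrite -addr_eq0 /T -partial_sum_split subnKC ?a_sum // ltnW.
rewrite -partial_sum_periodic -(@subnKC r (m + 5)); last by lia.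
rewrite partial_sum_split S_r addrC /vertex_level add0n -/(T _).
by rewrite (periodic_modn T_per (m + 5 - r)) (periodic_modn T_per (5 - r)) !T_levels ?ltn_mod.
Qed.

End CyclicPartialSums.

Definition bn (b : 'I_10 -> Z) (n : nat) : Z := b (inord n).

Fixpoint psum (b : 'I_10 -> Z) (n : nat) : Z :=
  if n is m.+1 then psum b m + bn b m.+1 else 0.

Lemma psumS (b : 'I_10 -> Z) n : psum b n.+1 = psum b n + bn b n.+1.
Proof. by []. Qed.

Definition xmx (o : bool) (z : Z) := if o then mx2 tZ z 0 1 else mx2 1 z 0 tZ.
Definition ymx (o : bool) (z : Z) := if o then mx2 1 (- z) 0 tZ else mx2 tZ (- z) 0 1.

Section ExplicitIsomorphism.

Variables (b c : 'I_10 -> Z) (p0 s0 sg : CC).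

Definition iso_ul n := fps_const p0 + fps_const sg * psum c n.
Definition iso_lr n := fps_const s0 - fps_const sg * psum b n.
Definition iso_ur n :=
  fps_const s0 * psum c n - fps_const p0 * psum b n - fps_const sg * psum b n * psum c n.

(* Given the lower-left entry sg, commuting with the arrows forces the other
   entries.  At even vertices the off-diagonal entries are rescaled by t,
   which is possible exactly when t divides [iso_ur n]. *)
Definition iso_mx n :=
  if odd n then mx2 (iso_ul n) (iso_ur n) (fps_const sg) (iso_lr n)
  else mx2 (iso_ul n) (fps_divt (iso_ur n)) (tZ * fps_const sg) (iso_lr n).

Lemma cterm_iso_ur n :
  cterm (iso_ur n) = conic p0 s0 sg (cterm (psum b n)) (cterm (psum c n)).
Proof. by rewrite /iso_ur /conic !ctermB !ctermM !cterm_const. Qed.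

Lemma iso_mx_intertwines m :
  (~~ odd m -> cterm (iso_ur m) = 0) -> (odd m -> cterm (iso_ur m.+1) = 0) ->
  iso_mx m.+1 *m xmx (odd m.+1) (bn b m.+1) = xmx (odd m.+1) (bn c m.+1) *m iso_mx m /\
  iso_mx m *m ymx (odd m.+1) (bn b m.+1) = ymx (odd m.+1) (bn c m.+1) *m iso_mx m.+1.
Proof.
move=> ur_m ur_Sm; rewrite /iso_mx /xmx /ymx /=.
set n := if odd m then m.+1 else m.
have ur_n : tZ * fps_divt (iso_ur n) = iso_ur n.
  by apply: fps_divtK; rewrite /n; case: ifP => [/ur_Sm | /negbT/ur_m].
rewrite /n {n} in ur_n *; case: (odd m) ur_n => /=; move: (fps_divt _) => q;
  rewrite /iso_ur /iso_ul /iso_lr /= => ur_n;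
  by rewrite !mx2M; split; congr mx2; rewrite ?(mulrC q) ?ur_n; ring.
Qed.

Lemma iso_mx_invertible n : p0 * s0 != 0 -> (~~ odd n -> cterm (iso_ur n) = 0) ->
  exists psi, iso_mx n *m psi = 1%:M /\ psi *m iso_mx n = 1%:M.
Proof.
move=> p0s0_neq0 ur_n; rewrite /iso_mx.
case: ifP => n_odd; apply: (mx2_invertible p0s0_neq0);
  rewrite -fps_constM /iso_ul /iso_lr; first by rewrite /iso_ur; ring.
have := fps_divtK (ur_n (negbT n_odd)); move: (fps_divt _) => q tq.
by rewrite [q * _]mulrCA [tZ * _]mulrA tq /iso_ur; ring.
Qed.

End ExplicitIsomorphism.

Lemma bn10 (b : 'I_10 -> Z) : bn b 10 = bn b 0.
Proof. by rewrite /bn; congr b; apply: val_inj; rewrite /inord !val_insubd. Qed.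

Lemma psum10 (b : 'I_10 -> Z) : psum b 10 = \sum_(i < 10) b i.
Proof.
rewrite (eq_bigr (fun i : 'I_10 => bn b i)) => [|i _]; last by rewrite /bn inord_val.
by rewrite !big_ord_recr big_ord0 /= bn10; ring.
Qed.

Lemma ord_pred_val (j : 'I_10) : val (ord_pred j) = (if val j is m.+1 then m else 9)%N.
Proof. by case: j => -[|[|[|[|[|[|[|[|[|[|//]]]]]]]]]]. Qed.

Lemma xmatE (b : 'I_10 -> Z) j : xmat b j = xmx (odd j) (bn b j).
Proof. by rewrite /bn inord_val. Qed.

Lemma ymatE (b : 'I_10 -> Z) j : ymat b j = ymx (odd j) (bn b j).
Proof. by rewrite /bn inord_val. Qed.

Lemma Misomorphic_conic {b c : 'I_10 -> Z} {p0 s0 sg : CC} :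
  \sum_(i < 10) b i = 0 -> \sum_(i < 10) c i = 0 -> p0 * s0 != 0 ->
  (forall m, (1 <= m <= 4)%N ->
     conic p0 s0 sg (cterm (psum b (2 * m))) (cterm (psum c (2 * m))) = 0) ->
  Misomorphic b c.
Proof.
move=> sum_b sum_c p0s0_neq0 conic_even.
have ur10 : iso_ur b c p0 s0 sg 10 = 0 by rewrite /iso_ur !psum10 sum_b sum_c; ring.
have ur0 : iso_ur b c p0 s0 sg 0 = 0 by rewrite /iso_ur /=; ring.
have ur_conic m : (1 <= m <= 4)%N -> cterm (iso_ur b c p0 s0 sg (2 * m)) = 0.
  by move=> /conic_even; rewrite cterm_iso_ur.
have ur_even n : ~~ odd n -> (n <= 10)%N -> cterm (iso_ur b c p0 s0 sg n) = 0.
  case: n => [|[|[|[|[|[|[|[|[|[|[|n]]]]]]]]]]] // _ _; rewrite ?ur0 ?ur10 //.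
  - exact: (ur_conic 1%N).
  - exact: (ur_conic 2%N).
  - exact: (ur_conic 3%N).
  - exact: (ur_conic 4%N).
have mx10 : iso_mx b c p0 s0 sg 10 = iso_mx b c p0 s0 sg 0.
  by rewrite /iso_mx /= ur10 ur0 /iso_ul /iso_lr !psum10 sum_b sum_c /=.
exists (iso_mx b c p0 s0 sg); split => [i | j].
  by apply: iso_mx_invertible => // /ur_even; apply; apply/ltnW.
rewrite !xmatE !ymatE (ord_pred_val j).
case: j => -[_ /=|m /= m_lt]; first rewrite -!bn10 -mx10.
all: apply: iso_mx_intertwines => m_odd; apply: ur_even; rewrite /= ?m_odd //; lia.
Qed.

Definition bpair (b : 'I_10 -> Z) (i : nat) : CC := cterm (Bsum b (inord ((2 * i + 1) %% 10))).

Lemma bpair_periodic (b : 'I_10 -> Z) i : bpair b (i + 5) = bpair b i.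
Proof. by rewrite /bpair mulnDr addnAC modnDr. Qed.

Lemma bpair_shift2 (b : 'I_10 -> Z) (j : 'I_10) l :
  odd j -> cterm (Bsum b (shift2 j l)) = bpair b (j./2 + l).
Proof.
move=> j_odd; rewrite /shift2 /bpair; congr (cterm (Bsum b (inord (_ %% 10)))).
by rewrite -{1}(odd_double_half j) j_odd -muln2; lia.
Qed.

Lemma Bsum_bn (b : 'I_10 -> Z) k : (k < 10)%N -> Bsum b (inord k) = bn b k + bn b k.+1.
Proof.
rewrite /Bsum /bn => k_lt; congr (_ + b _); apply: val_inj.
rewrite /= inordK //; have [k_lt9 | k_ge9] := ltnP k.+1 10.
  by rewrite modn_small ?inordK.
have -> : k = 9%N by lia.
by rewrite /inord val_insubd.
Qed.

Lemma cterm_psum_even (b : 'I_10 -> Z) m :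
  (m <= 5)%N -> cterm (psum b (2 * m)) = \sum_(i < m) bpair b i.
Proof.
elim: m => [|m IHm] m_le; first by rewrite big_ord0.
rewrite mulnS add2n !psumS big_ord_recr /= -IHm; last exact: ltnW.
rewrite /bpair modn_small; last by lia.
by rewrite Bsum_bn ?addn1 ?ctermD ?addrA //; lia.
Qed.

Lemma cterm_psum_levels {b : 'I_10 -> Z} {j : 'I_10} : odd j -> \sum_(i < 10) b i = 0 ->
  tdvd (Bsum b j) -> ~ tdvd (Bsum b (shift2 j 1)) -> ~ tdvd (Bsum b (shift2 j 2)) ->
  ~ tdvd (Bsum b (shift2 j 1) + Bsum b (shift2 j 2)) ->
  tdvd (Bsum b (shift2 j 2) + Bsum b (shift2 j 3)) ->
  exists W : 'I_3 -> CC, injective W /\ forall m, (m <= 4)%N ->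
    cterm (psum b (2 * m)) = W (vertex_level j./2 m) - W (vertex_level j./2 0).
Proof.
move=> j_odd sum_b /tdvdP Bj B1 B2 B12 /tdvdP B23.
have ntdvd f : ~ tdvd f -> cterm f != 0 by move=> f_ndvd; apply/eqP => /tdvdP.
have shift k : cterm (Bsum b (shift2 j k)) = bpair b (j./2 + k) := bpair_shift2 b j k j_odd.
have a_sum : \sum_(i < 5) bpair b i = 0 by rewrite -cterm_psum_even // psum10 sum_b.
exists (level_values (bpair b j./2.+1) (bpair b j./2.+2)); split.
  apply: level_values_inj; rewrite -?(addn2 j./2) -?(addn1 j./2) -!shift -?ctermD; exact: ntdvd.
move=> m m_le; rewrite cterm_psum_even; last exact: leq_trans m_le _.
apply: partial_sum_levels => //; first exact: bpair_periodic.
- by rewrite ltn_half_double.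
- by rewrite -[j./2]addn0 -shift /shift2 muln0 addn0 modn_small ?inord_val.
- by rewrite -(addn3 j./2) -(addn2 j./2) -!shift -ctermD.
Qed.

Theorem theorem2p4 (b c : 'I_10 -> Z)
  (hb : \sum_(i < 10) b i = 0) (hc : \sum_(i < 10) c i = 0)
  (j : 'I_10) (hj : odd j)
  (hBj : tdvd (Bsum b j)) (hCj : tdvd (Bsum c j))
  (hBi : forall l : nat, (1 <= l <= 4)%N -> ~ tdvd (Bsum b (shift2 j l)))
  (hCi : forall l : nat, (1 <= l <= 4)%N -> ~ tdvd (Bsum c (shift2 j l)))
  (hB12 : ~ tdvd (Bsum b (shift2 j 1) + Bsum b (shift2 j 2)))
  (hB23 : tdvd (Bsum b (shift2 j 2) + Bsum b (shift2 j 3)))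
  (hC12 : ~ tdvd (Bsum c (shift2 j 1) + Bsum c (shift2 j 2)))
  (hC23 : tdvd (Bsum c (shift2 j 2) + Bsum c (shift2 j 3))) :
  Misomorphic b c.
Proof.
(* t does not divide B_(i3), B_(i4): this follows from the other hypotheses. *)
have [Wb [Wb_inj b_levels]] :=
  cterm_psum_levels hj hb hBj (hBi 1%N erefl) (hBi 2%N erefl) hB12 hB23.
have [Wc [Wc_inj c_levels]] :=
  cterm_psum_levels hj hc hCj (hCi 1%N erefl) (hCi 2%N erefl) hC12 hC23.
have [p0 [s0 [sg [p0s0_neq0 conic_levels]]]] :=
  conic_three_levels (vertex_level j./2 0) Wb_inj Wc_inj.
apply: (Misomorphic_conic hb hc p0s0_neq0) => m /andP[_ m_le].
by rewrite b_levels // c_levels.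
Qed.
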